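(* Let $d\geq 2$. Suppose a finite bipartite graph $G$ with vertex classes $A$ and $B$ satisfies $|A|\geq d^6|B|$, $d_G(x,y)\leq d$ for all distinct $x,y\in B$, and $d_G(v)\leq d$ for every $v\in A$. Then $G$ contains a subgraph $G'$ which is $C_4$-free and has average degree at least $d(G)/5$.
   Context: $d(G)=2e(G)/|V(G)|$ is the average degree, $d_G(v)$ the degree of $v$, and the codegree $d_G(x,y)$ is the number of common neighbours of $x$ and $y$. A graph is $C_4$-free if it contains no $4$-cycle as a subgraph. *)

From mathcomp Require Import all_boot all_order all_algebra.
Set Implicit Arguments. Unset Strict Implicit. Unset Printing Implicit Defensive.
Import Order.TTheory GRing.Theory Num.Theory.

Section Graphs.
Variable T : finType.

Definition simple_graph (e : rel T) : Prop :=
  (forall x y, e x y = e y x) /\ (forall x, ~~ e x x).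

Definition deg (e : rel T) (v : T) : nat := #|[set u | e v u]|.

(* codegree d_G(x,y): number of common neighbours *)
Definition codeg (e : rel T) (x y : T) : nat := #|[set v | e x v && e y v]|.

Definition bipartite_with (e : rel T) (A B : {set T}) : Prop :=
  [disjoint A & B] /\ A :|: B = [set: T] /\
  (forall x y, e x y -> (x \in A) && (y \in B) || (x \in B) && (y \in A)).

Definition subgraph (e : rel T) (S : {set T}) (e' : rel T) : Prop :=
  (forall x y, e' x y = e' y x) /\
  (forall x y, e' x y -> [&& e x y, x \in S & y \in S]).

Definition deg_in (S : {set T}) (e' : rel T) (v : T) : nat :=
  #|[set u in S | e' v u]|.

(* average degree 2 e(G)/|V(G)| = (sum of degrees)/|V|, as a rational
   (0 for the empty vertex set) *)
Definition avg_deg (S : {set T}) (e' : rel T) : rat :=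
  ((\sum_(v in S) deg_in S e' v)%N)%:R / (#|S|)%:R.

Definition C4_free (S : {set T}) (e' : rel T) : Prop :=
  ~ exists a b c d : T,
      [/\ [&& a \in S, b \in S, c \in S & d \in S],
          [&& a != b, a != c, a != d, b != c, b != d & c != d] &
          [&& e' a b, e' b c, e' c d & e' d a]].
End Graphs.

From mathcomp Require Import all_boot all_order all_algebra.
From mathcomp Require Import zify.
Import Order.TTheory GRing.Theory Num.Theory.
Set Implicit Arguments. Unset Strict Implicit. Unset Printing Implicit Defensive.

(* Give each a in A the weight 5 |V| d_G(a) - 2 e(G), truncated at 0. Call two
   vertices of A in conflict when they have two common neighbours; as d_G(a) <= d
   and codegrees in B are at most d, each vertex has at most d^3 conflicts, so a
   greedy choice yields a conflict-free I in A carrying a 1/(d^3 + 1) share of the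
   total weight. The edges at I form a C4-free graph, since a 4-cycle would need
   two vertices of I with two common neighbours, and |A| >= d^6 |B| makes the
   weight of I large enough for the graph on I and B to have average degree at
   least d(G)/5. *)

Lemma leq_card_bigcup (T I : finType) (P : pred I) (F : I -> {set T}) :
  #|\bigcup_(i | P i) F i| <= \sum_(i | P i) #|F i|.
Proof.
elim/big_rec2: _ => [|i X s _ IH]; first by rewrite cards0.
exact: leq_trans (leq_card_setU _ _) (leq_add _ IH).
Qed.

Lemma exists_stable_set_weight (T : finType) (H : rel T) (w : T -> nat) (D : nat)
    (U : {set T}) :
  symmetric H -> {in U, forall x, #|[set y in U | H x y]| <= D} ->
  exists I : {set T}, [/\ I \subset U, {in I &, forall x y, x != y -> ~~ H x y}
    & \sum_(x in U) w x <= D.+1 * \sum_(x in I) w x].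
Proof.
move=> H_sym; elim: {U}_.+1 {-2}U (ltnSn #|U|) => // k IH U ltUk degU.
have [->|[a0 a0U]] := set_0Vmem U.
  by exists set0; rewrite sub0set big_set0; split=> // x; rewrite inE.
have [a aU a_max] := arg_maxnP w (P := fun x => x \in U) a0U.
pose N := a |: [set y in U | H a y].
have sNU : N \subset U by rewrite subUset sub1set aU setIdE subsetIl.
have aN : a \in N by rewrite setU11.
have ltNk : #|U :\: N| < k.
  have N_gt0 : 0 < #|N| by apply/card_gt0P; exists a.
  by move: ltUk (subset_leq_card sNU); rewrite (cardsDS sNU); lia.
have degN : {in U :\: N, forall x, #|[set y in U :\: N | H x y]| <= D}.
  move=> x /setDP[xU _]; apply: leq_trans (degU x xU).
  by apply: subset_leq_card; apply/subsetP=> y /[!inE] /andP[/andP[_ ->] ->].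
have [I [sIU I_stable I_heavy]] := IH _ ltNk degN.
have aI : a \notin I by apply: contraTN aN => /(subsetP sIU) /setDP[].
exists (a |: I); split.
- by rewrite subUset sub1set aU (subset_trans sIU) ?subsetDl.
- have aIH y : y \in I -> ~~ H a y.
    move=> /(subsetP sIU) /setDP[yU]; apply: contra => Hay.
    by rewrite /N !inE yU Hay orbT.
  move=> x y /setU1P[->|xI] /setU1P[->|yI]; rewrite ?eqxx // => xy.
  + exact: aIH.
  + by rewrite H_sym aIH.
  + exact: I_stable.
- rewrite big_setU1 //= (big_setID N) /= (setIidPr sNU) mulnDr.
  apply: leq_add I_heavy.
  apply: leq_trans (_ : \sum_(x in N) w a <= _).
    by apply: leq_sum => x /(subsetP sNU); apply: a_max.
  by rewrite sum_nat_const leq_mul2r cardsU1 -add1n leq_add ?leq_b1 ?degU ?orbT.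
Qed.

Section CodegreeStableSets.
Variables (T : finType) (e : rel T).
Hypothesis e_sym : symmetric e.

Lemma codegC x y : codeg e x y = codeg e y x.
Proof. by apply: eq_card => v; rewrite !inE andbC. Qed.

Lemma codeg_gt1P x y :
  reflect (exists u v, [/\ u != v, e x u, e y u, e x v & e y v]) (1 < codeg e x y).
Proof.
apply: (iffP card_gt1P) => [[u [v [/[!inE] /andP[xu yu] /andP[xv yv] uv]]] | ].
  by exists u, v.
by move=> [u [v [uv xu yu xv yv]]]; exists u, v; rewrite !inE xu yu xv yv.
Qed.

Lemma card_codeg_gt1 x c :
  (forall u v, e x u -> e x v -> u != v -> codeg e u v <= c) ->
  #|[set y | 1 < codeg e x y]| <= deg e x * deg e x * c.
Proof.
move=> codeg_le; pose Nx := [set u | e x u].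
pose common u v := [set y | [&& u != v, e u y & e v y]].
have sub : [set y | 1 < codeg e x y] \subset \bigcup_(u in Nx) \bigcup_(v in Nx) common u v.
  apply/subsetP=> y /[!inE] /codeg_gt1P[u [v [uv xu yu xv yv]]].
  apply/bigcupP; exists u; rewrite ?inE //; apply/bigcupP; exists v; rewrite ?inE //.
  by rewrite uv e_sym yu e_sym yv.
apply: leq_trans (subset_leq_card sub) _; apply: leq_trans (leq_card_bigcup _ _) _.
rewrite -mulnA -sum_nat_const; apply: leq_sum => u /[!inE] xu.
apply: leq_trans (leq_card_bigcup _ _) _; rewrite -sum_nat_const.
apply: leq_sum => v /[!inE] xv; have [<-|uv] := eqVneq u v.
  by rewrite (_ : common u u = set0) ?cards0 //; apply/setP=> y; rewrite !inE eqxx.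
apply: leq_trans (codeg_le u v xu xv uv).
by apply: subset_leq_card; apply/subsetP=> y; rewrite !inE uv.
Qed.

Lemma deg_sum_in (X : {set T}) v :
  (forall u, e v u -> u \in X) -> deg e v = \sum_(u in X) e v u.
Proof.
move=> nbrX; rewrite /deg -sum1_card big_mkcond [RHS]big_mkcond /=.
apply: eq_bigr => u _; rewrite inE; case evu: (e v u); first by rewrite nbrX.
by rewrite if_same.
Qed.

Definition incident_edges (I : {set T}) : rel T :=
  fun x y => e x y && ((x \in I) || (y \in I)).

Variable I : {set T}.

Lemma incident_edges_subgraph (S : {set T}) :
  I \subset S -> (forall x y, x \in I -> e x y -> y \in S) ->
  subgraph e S (incident_edges I).
Proof.
move=> sIS nbrS; split=> [x y | x y /andP[exy /orP[xI | yI]]].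
  by rewrite /incident_edges e_sym orbC.
  by rewrite exy (subsetP sIS x xI) (nbrS x y xI exy).
by rewrite exy (subsetP sIS y yI) (nbrS y x yI) // e_sym.
Qed.

Lemma deg_in_incident_edges (S : {set T}) a :
  a \in I -> (forall y, e a y -> y \in S) -> deg_in S (incident_edges I) a = deg e a.
Proof.
move=> aI nbrS; apply: eq_card => y; rewrite !inE /incident_edges aI /= andbT.
by apply/andP/idP=> [[] | eay]; last rewrite nbrS.
Qed.

Hypotheses (I_indep : {in I &, forall x y, ~~ e x y})
  (I_codeg : {in I &, forall x y, x != y -> codeg e x y <= 1}).

Lemma incident_edges_C4_free (S : {set T}) : C4_free S (incident_edges I).
Proof.
have no_C4 x y u v : x \in I -> y \in I -> x != y -> u != v ->
    e x u -> e y u -> e x v -> e y v -> False.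
  move=> xI yI xy uv xu yu xv yv.
  move: (I_codeg xI yI xy); rewrite leqNgt => /negP; apply.
  by apply/codeg_gt1P; exists u, v.
move=> [a [b [c [d [_ /and5P[ab ac ad bc /andP[bd cd]]]]]]].
rewrite /incident_edges => /and4P[/andP[eab abI] /andP[ebc bcI] /andP[ecd cdI] /andP[eda daI]].
have [aI | aNI] := boolP (a \in I).
  have bNI : b \notin I by apply: contraTN eab => bI; apply: I_indep.
  have cI : c \in I by move: bcI; rewrite (negbTE bNI).
  by apply: (no_C4 a c b d); rewrite // -1?e_sym.
have bI : b \in I by move: abI; rewrite (negbTE aNI).
have dI : d \in I by move: daI; rewrite (negbTE aNI) orbF.
by apply: (no_C4 b d a c); rewrite // -1?e_sym.
Qed.

End CodegreeStableSets.

Lemma avg_deg_setT (T : finType) (e : rel T) :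
  avg_deg [set: T] e = ((\sum_(v in [set: T]) deg e v)%:R / #|T|%:R)%R.
Proof.
rewrite /avg_deg cardsT; congr (_%:R / _)%R; apply: eq_bigr => v _.
by apply: eq_card => u; rewrite !inE.
Qed.

Lemma avg_deg_ge0 (T : finType) (S : {set T}) (e : rel T) : (0 <= avg_deg S e)%R.
Proof. by rewrite divr_ge0 ?ler0n. Qed.

Lemma avg_deg_setT_div_le (T : finType) (e : rel T) (S : {set T}) (e' : rel T) k :
  0 < k -> 0 < #|S| ->
  (\sum_(v in [set: T]) deg e v) * #|S| <= k * #|T| * \sum_(v in S) deg_in S e' v ->
  (avg_deg [set: T] e / k%:R <= avg_deg S e')%R.
Proof.
move=> k_gt0 S_gt0 le_sum; have T_gt0 : 0 < #|T| by apply: leq_trans S_gt0 (max_card S).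
rewrite avg_deg_setT /avg_deg ler_pdivlMr ?ltr0n // mulrAC ler_pdivrMr ?ltr0n //.
rewrite mulrAC ler_pdivrMr ?ltr0n // -!natrM ler_nat.
by rewrite -mulnA [leqRHS]mulnC.
Qed.

Section CodegreeBoundedBipartite.
Variables (T : finType) (e : rel T) (A B : {set T}) (d : nat).
Hypotheses (e_sym : symmetric e) (eAB : bipartite_with e A B).

Local Notation sum_deg := (\sum_(v in [set: T]) deg e v).

Lemma bipartite_nbrA x : x \in A -> forall y, e x y -> y \in B.
Proof.
case: eAB => AB [_ e_AB] xA y /e_AB.
by rewrite xA (disjointFr AB xA) /= orbF.
Qed.

Lemma bipartite_nbrB x : x \in B -> forall y, e x y -> y \in A.
Proof.
case: eAB => AB [_ e_AB] xB y /e_AB.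
by rewrite xB (disjointFl AB xB).
Qed.

Lemma bipartite_indepA : {in A &, forall x y, ~~ e x y}.
Proof.
case: eAB => AB _ x y xA yA; apply/negP => /(bipartite_nbrA xA).
by rewrite (disjointFr AB yA).
Qed.

Lemma sum_deg_B_A : \sum_(b in B) deg e b = \sum_(a in A) deg e a.
Proof.
under eq_bigr => b bB do rewrite (deg_sum_in (bipartite_nbrB bB)).
rewrite exchange_big; apply: eq_bigr => a aA.
by rewrite (deg_sum_in (bipartite_nbrA aA)); apply: eq_bigr => b _; rewrite e_sym.
Qed.

Lemma sum_deg_bipartite : sum_deg = 2 * \sum_(a in A) deg e a.
Proof.
case: eAB => AB [AUB _]; rewrite -AUB (eq_bigl _ _ (fun v => in_setU v A B)).
by rewrite bigU //= sum_deg_B_A addnn mul2n.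
Qed.

Hypotheses (d_gt1 : 1 < d) (size_AB : d ^ 6 * #|B| <= #|A|)
  (codeg_B : forall x y, x \in B -> y \in B -> x != y -> codeg e x y <= d)
  (deg_A : forall v, v \in A -> deg e v <= d).

Lemma card_codeg_gt1_A x : x \in A -> #|[set y | 1 < codeg e x y]| <= d ^ 3.
Proof.
move=> xA; apply: leq_trans (card_codeg_gt1 e_sym (c := d) _) _.
  by move=> u v xu xv; apply: codeg_B; apply: bipartite_nbrA xA _ _.
by rewrite !expnS expn0 muln1 mulnA !leq_mul ?deg_A.
Qed.

Definition surplus a := 5 * #|T| * deg e a - sum_deg.

Lemma sum_surplus_A : 3 * #|T| * \sum_(a in A) deg e a <= \sum_(a in A) surplus a.
Proof.
have le_sum : 5 * #|T| * \sum_(a in A) deg e a <= \sum_(a in A) surplus a + #|A| * sum_deg.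
  rewrite big_distrr -sum_nat_const -big_split; apply: leq_sum => a _.
  by rewrite /= /surplus addnC -leq_subLR.
by move: le_sum (max_card A); rewrite sum_deg_bipartite; nia.
Qed.

Lemma card_B_small : 2 * (d ^ 3).+1 * #|B| <= 3 * #|T|.
Proof.
have d3_ge8 : 8 <= d ^ 3 by rewrite (_ : 8 = 2 ^ 3) // leq_exp2r.
have : d ^ 3 * d ^ 3 * #|B| <= #|T| by rewrite -expnD (leq_trans size_AB) ?max_card.
nia.
Qed.

Lemma exists_heavy_codeg_stable_set :
  exists I : {set T}, [/\ I \subset A, {in I &, forall x y, x != y -> codeg e x y <= 1}
    & sum_deg * (#|I| + #|B|) <= 5 * #|T| * \sum_(a in I) deg e a].
Proof.
pose U := [set a in A | sum_deg <= 5 * #|T| * deg e a].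
have sUA : U \subset A by rewrite /U setIdE subsetIl.
have conflicts : {in U, forall x, #|[set y in U | 1 < codeg e x y]| <= d ^ 3}.
  move=> x /(subsetP sUA) xA; apply: leq_trans (card_codeg_gt1_A xA).
  by apply: subset_leq_card; apply/subsetP=> y /[!inE] /andP[].
have codeg_sym : symmetric (fun x y => 1 < codeg e x y) by move=> x y; rewrite codegC.
have [I [sIU I_stable I_heavy]] := exists_stable_set_weight surplus codeg_sym conflicts.
exists I; split.
- exact: subset_trans sIU sUA.
- by move=> x y xI yI xy; rewrite leqNgt I_stable.
have sum_A_U : \sum_(a in A) surplus a <= \sum_(a in U) surplus a.
  rewrite big_mkcond [leqRHS]big_mkcond; apply: leq_sum => a _; rewrite inE.
  case: (a \in A) => //=; case: ifP => // /negbT; rewrite -ltnNge => /ltnW.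
  by rewrite /surplus -subn_eq0 => /eqP ->.
have weight_I : sum_deg * #|B| <= \sum_(a in I) surplus a.
  rewrite -(@leq_pmul2l (d ^ 3).+1) // (leq_trans _ I_heavy) // (leq_trans _ sum_A_U) //.
  apply: leq_trans sum_surplus_A; move: card_B_small; rewrite sum_deg_bipartite; nia.
have surplusK a : a \in I -> surplus a + sum_deg = 5 * #|T| * deg e a.
  by move=> /(subsetP sIU); rewrite inE => /andP[_ le_deg]; rewrite subnK.
rewrite big_distrr -(eq_bigr _ surplusK) big_split sum_nat_const /=; nia.
Qed.

End CodegreeBoundedBipartite.

Theorem lemma12 (T : finType) (e : rel T) (A B : {set T}) (d : nat) :
  simple_graph e ->
  bipartite_with e A B ->
  (2 <= d)%N ->
  (d ^ 6 * #|B| <= #|A|)%N ->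
  (forall x y, x \in B -> y \in B -> x != y -> (codeg e x y <= d)%N) ->
  (forall v, v \in A -> (deg e v <= d)%N) ->
  exists (S : {set T}) (e' : rel T),
    [/\ subgraph e S e', C4_free S e' &
        (avg_deg [set: T] e / 5%:R <= avg_deg S e')%R].
Proof.
move=> [e_sym _] eAB d_gt1 size_AB codeg_B deg_A.
have [I [sIA I_codeg I_heavy]] :=
  exists_heavy_codeg_stable_set e_sym eAB d_gt1 size_AB codeg_B deg_A.
have I_indep := sub_in2 (subsetP sIA) (bipartite_indepA eAB).
have nbr_IB x y : x \in I -> e x y -> y \in I :|: B.
  by move=> /(subsetP sIA) xA /(bipartite_nbrA eAB xA) yB; rewrite inE yB orbT.
exists (I :|: B), (incident_edges e I); split.
- exact: incident_edges_subgraph (subsetUl _ _) nbr_IB.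
- exact: incident_edges_C4_free.
have [/eqP | B_gt0] := posnP #|B|.
  rewrite cards_eq0 => /eqP B0.
  rewrite avg_deg_setT (sum_deg_bipartite e_sym eAB) -(sum_deg_B_A e_sym eAB) B0 big_set0.
  by rewrite !mul0r avg_deg_ge0.
have le_card : #|I :|: B| <= #|I| + #|B| := leq_card_setU I B.
have le_sum : \sum_(a in I) deg e a
    <= \sum_(v in I :|: B) deg_in (I :|: B) (incident_edges e I) v.
  rewrite [leqRHS](big_setID I) /= (setIidPr (subsetUl I B)).
  apply: leq_trans (leq_addr _ _); apply: eq_leq; apply: eq_bigr => a aI.
  by rewrite deg_in_incident_edges // => y; apply: nbr_IB.
apply: avg_deg_setT_div_le => //; first by rewrite (leq_trans B_gt0) ?subset_leq_card ?subsetUr.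
apply: leq_trans (leq_mul (leqnn _) le_card) _.
exact: leq_trans I_heavy (leq_mul (leqnn _) le_sum).
Qed.
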